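(* In the setting described in the context (with any one of the three learning-rate setups (a), (b), (c)), there exist a deterministic constant $C$ and an integer $m_0$ such that for all $m\ge m_0$, $$\|z_{2,m}\|_m\le T_m\,C\,\big(\|w_{t_m}-w_*\|_m+1\big).$$
   Context: Setting. $\{Y_t\}_{t\ge0}$ is a Markov chain on a measurable space $\mathcal{Y}$ with transition kernel $P$ and unique stationary distribution $d_{\mathcal{Y}}$, with $\int|P^n(y,y')-d_{\mathcal{Y}}(y')|\,\mathrm{d}y'\le C_A\varrho^n$ for all $y,n$, some $\varrho\in[0,1)$. $H:\mathbb{R}^d\times\mathcal{Y}\to\mathbb{R}^d$, $h(w)=\mathbb{E}_{y\sim d_{\mathcal{Y}}}[H(w,y)]$; for some norm $\|\cdot\|$ and $\kappa\in[0,1)$, $\|h(w)-h(w')\|\le\kappa\|w-w'\|$, with fixed point $w_*$; $\|H(w,y)-H(w',y)\|\le L_h\|w-w'\|$ for all $w,w',y$ and $\sup_y\|H(0,y)\|<\infty$. Iterates: $w_0\in\mathbb{R}^d$, $w_{t+1}=w_t+\alpha_t(H(w_t,Y_{t+1})-w_t)$. Put $G(w,y)=H(w,y)-w$. Learning-rate setups with $C_\alpha>0$: (a) $\alpha_t=\frac{C_\alpha}{t+3}$, $T_m=\frac{C_\alpha\ln^{\nu_1}(m+3)}{m+3}$, $\nu_1\in(0,1)$; (b) $\alpha_t=\frac{C_\alpha}{(t+3)^\nu}$, $\nu\in(\frac23,1)$, $T_m=\frac{C_\alpha}{(m+3)^{\nu_2}}$, $\frac12<\nu_2<\frac\nu{2-\nu}$;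 (c) $\alpha_t=\frac{C_\alpha}{(t+3)\ln^\nu(t+3)}$, $\nu\in(0,1)$, $T_m=\frac{C_\alpha}{m+3}$. Anchors: $t_0=0$, $t_{m+1}=\min\{k:\sum_{t=t_m}^{k-1}\alpha_t\ge T_m\}$. Filtration $\mathcal{F}_t=\sigma(w_0,Y_1,\dots,Y_t)$, $\mathbb{E}_m[\cdot]=\mathbb{E}[\cdot\mid\mathcal{F}_{t_m}]$. Define $z_{2,m}=\sum_{t=t_m}^{t_{m+1}-1}\alpha_t\big(G(w_{t_m},Y_{t+1})-\mathbb{E}_m[G(w_{t_m},Y_{t+1})]\big)$. The norm $\|\cdot\|_m$: fix a norm $\|\cdot\|_s$ such that $\frac12\|\cdot\|_s^2$ is smooth w.r.t. $\|\cdot\|_s$ and $\xi>0$; $\|\cdot\|_m$ is the norm with $\frac12\|w\|_m^2=\inf_u\{\frac12\|u\|^2+\frac1{2\xi}\|w-u\|_s^2\}$. *)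

From HB Require Import structures.
From mathcomp Require Import all_boot all_order all_algebra.
From mathcomp Require Import all_classical all_reals all_analysis.
Set Implicit Arguments. Unset Strict Implicit. Unset Printing Implicit Defensive.
Import Order.TTheory GRing.Theory Num.Theory.
Import numFieldNormedType.Exports.
Local Open Scope classical_set_scope.
Local Open Scope ring_scope.

Definition is_norm (R : realType) (d : nat) (n : 'rV[R]_d -> R) : Prop :=
  (forall x, 0 <= n x) /\ (forall x, n x = 0 -> x = 0) /\
  (forall (a : R) x, n (a *: x) = `|a| * n x) /\
  (forall x y, n (x + y) <= n x + n y).

Definition dotp (R : realType) (d : nat) (x y : 'rV[R]_d) : R := (x *m y^T) 0 0.

(* (1/2) ns(.)^2 is L-smooth w.r.t. ns (for some L), i.e. it has a gradient
   g with the quadratic upper bound (for the convex function 1/2 ns^2 this is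
   equivalent to differentiability with ns-Lipschitz gradient). *)
Definition half_sq_smooth (R : realType) (d : nat) (ns : 'rV[R]_d -> R) : Prop :=
  exists (L : R) (g : 'rV[R]_d -> 'rV[R]_d), 0 < L /\
    forall x y, ns y ^+ 2 / 2 <=
      ns x ^+ 2 / 2 + dotp (g x) (y - x) + L / 2 * ns (y - x) ^+ 2.

(* Moreau-envelope norm: 1/2 ||w||_m^2 = inf_u {1/2 ||u||^2 + 1/(2 xi) ||w-u||_s^2} *)
Definition normm (R : realType) (d : nat) (nrm ns : 'rV[R]_d -> R) (xi : R)
  (w : 'rV[R]_d) : R :=
  Num.sqrt (2 * inf [set nrm u ^+ 2 / 2 + ns (w - u) ^+ 2 / (2 * xi) | u in [set: 'rV[R]_d]]).

Definition vint (dY : measure_display) (Y : measurableType dY) (R : realType) (d : nat)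
  (mu : {measure set Y -> \bar R}) (f : Y -> 'rV[R]_d) : 'rV[R]_d :=
  \row_i (\int[mu]_(y in [set: Y]) f y 0 i).

Definition kop (dY : measure_display) (Y : measurableType dY) (R : realType)
  (P : R.-pker Y ~> Y) (f : Y -> R) : Y -> R :=
  fun y => \int[P y]_(z in [set: Y]) f z.

Definition kpow (dY : measure_display) (Y : measurableType dY) (R : realType)
  (P : R.-pker Y ~> Y) (n : nat) (f : Y -> R) : Y -> R := iter n (kop P) f.

Fixpoint witer (dY : measure_display) (Y : measurableType dY) (R : realType) (d : nat)
  (H : 'rV[R]_d -> Y -> 'rV[R]_d) (alpha : nat -> R) (w0 : 'rV[R]_d)
  (Ys : nat -> Y) (t : nat) : 'rV[R]_d :=
  match t with
  | 0 => w0
  | t'.+1 => let w := witer H alpha w0 Ys t' in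
             w + alpha t' *: (H w (Ys t'.+1) - w)
  end.

Definition next_anchor (R : realType) (alpha : nat -> R) (Tm : R) (s : nat) : nat :=
  match pselect (exists k, `[< Tm <= \sum_(s <= t < k) alpha t >]) with
  | left H => ex_minn H
  | right _ => s
  end.

Fixpoint anchor (R : realType) (alpha : nat -> R) (T : nat -> R) (m : nat) : nat :=
  match m with
  | 0 => 0
  | m'.+1 => next_anchor alpha (T m') (anchor alpha T m')
  end.

Definition lr_setup (R : realType) (Calpha : R) (alpha T : nat -> R) : Prop :=
  (exists nu1 : R, 0 < nu1 < 1 /\
     (forall t, alpha t = Calpha / (t%:R + 3)) /\
     (forall m, T m = Calpha * (ln (m%:R + 3 : R)) `^ nu1 / (m%:R + 3)))
  \/
  (exists nu nu2 : R, 2/3 < nu < 1 /\ 1/2 < nu2 < nu / (2 - nu) /\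
     (forall t, alpha t = Calpha / (t%:R + 3) `^ nu) /\
     (forall m, T m = Calpha / (m%:R + 3) `^ nu2))
  \/
  (exists nu : R, 0 < nu < 1 /\
     (forall t, alpha t = Calpha / ((t%:R + 3) * (ln (t%:R + 3 : R)) `^ nu)) /\
     (forall m, T m = Calpha / (m%:R + 3))).

From HB Require Import structures.
From mathcomp Require Import all_boot all_order all_algebra.
From mathcomp Require Import all_classical all_reals all_analysis.
From mathcomp Require Import ring lra.
Set Implicit Arguments. Unset Strict Implicit. Unset Printing Implicit Defensive.
Import Order.TTheory GRing.Theory Num.Theory.
Import numFieldNormedType.Exports.
Local Open Scope classical_set_scope.
Local Open Scope ring_scope.

(* The increment [z_{2,m}] is a sum over the block [t_m <= t < t_{m+1}] of
   [alpha_t] times the difference between [G(w, Y_{t+1})] and its conditional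
   expectation given [F_{t_m}], with [w = w_{t_m}] frozen.  Since [H] is
   Lipschitz and [H(0, .)] is bounded, [G(w, .)] is bounded in the sup norm by
   a multiple of [||w - w_*||_m + 1]; a Markov kernel does not increase sup
   norms, so the conditional expectation obeys the same bound.  The block
   weights sum to at most [2 T_m]: the anchors strictly increase because
   [sum_t alpha_t] diverges (like [ln ln t]), hence [t_m >= m] and every single
   [alpha_t] with [t >= t_m] is at most [T_m].  Equivalence of norms in finite
   dimension, together with [||.||_m <= ||.|| <= Q ||.||_m] for the Moreau
   envelope norm, turns everything into [||.||_m].  No mixing is needed. *)

Section row_mx_norm.
Variables (R : realType) (d : nat).

Lemma normr_entry_le_mx (x : 'rV[R]_d) i : `|x 0 i| <= `|x|.
Proof.
have /mapP[j _ ->] : `|x 0 i| \in [seq `|x k.1 k.2| | k : 'I_1 * 'I_d].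
  by apply/mapP; exists (0, i) => //=; rewrite mem_enum.
by rewrite [leRHS]/Num.norm /= mx_normrE; apply/bigmax_geP; right; exists j.
Qed.

Lemma mx_norm_le_entries (x : 'rV[R]_d) K :
  0 <= K -> (forall i, `|x 0 i| <= K) -> `|x| <= K.
Proof.
move=> K0 hx; rewrite [leLHS]/Num.norm /= mx_normrE; apply/bigmax_leP.
by split=> // -[i j] _ /=; rewrite (ord1 i).
Qed.

End row_mx_norm.

Section is_norm_theory.
Variables (R : realType) (d : nat) (N : 'rV[R]_d -> R).
Hypothesis hN : is_norm N.

Lemma is_norm_ge0 x : 0 <= N x. Proof. by case: hN. Qed.

Lemma is_normZ a x : N (a *: x) = `|a| * N x. Proof. by case: hN => _ [_ []]. Qed.

Lemma is_normD x y : N (x + y) <= N x + N y. Proof. by case: hN => _ [_ []]. Qed.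

Lemma is_norm0 : N 0 = 0. Proof. by rewrite -(scale0r 0) is_normZ normr0 mul0r. Qed.

Lemma is_normN x : N (- x) = N x.
Proof. by rewrite -scaleN1r is_normZ normrN normr1 mul1r. Qed.

Lemma is_normB x y : N (x - y) <= N x + N y.
Proof. by rewrite -(is_normN y) is_normD. Qed.

Lemma is_norm_distB x y : `|N x - N y| <= N (x - y).
Proof.
have := is_normD (x - y) y; have := is_normD (y - x) x.
rewrite !subrK -[y - x]opprB is_normN ler_norml; lra.
Qed.

Lemma is_norm_sum (I : Type) (r : seq I) (f : I -> 'rV[R]_d) :
  N (\sum_(i <- r) f i) <= \sum_(i <- r) N (f i).
Proof.
apply: (big_ind2 (fun x y => N x <= y)) => //; first by rewrite is_norm0.
by move=> x1 x2 y1 y2 h1 h2; apply: le_trans (is_normD _ _) (lerD h1 h2).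
Qed.

Lemma is_norm_sum_scale_le (I : Type) (r : seq I) (a : I -> R) (v : I -> 'rV[R]_d) M :
  (forall i, 0 <= a i) -> (forall i, N (v i) <= M) ->
  N (\sum_(i <- r) a i *: v i) <= (\sum_(i <- r) a i) * M.
Proof.
move=> a0 hv; rewrite mulr_suml; apply: le_trans (is_norm_sum _ _) _.
by apply: ler_sum => i _; rewrite is_normZ ger0_norm // ler_wpM2l.
Qed.

Lemma is_norm_le_mx : exists2 b, 0 <= b & forall x, N x <= b * `|x|.
Proof.
exists (\sum_(j < d) N (delta_mx 0 j)) => [|x].
  by apply: sumr_ge0 => j _; exact: is_norm_ge0.
rewrite {1}(row_sum_delta x) mulr_suml; apply: le_trans (is_norm_sum _ _) _.
apply: ler_sum => j _; rewrite is_normZ mulrC.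
by apply: ler_wpM2l; [exact: is_norm_ge0 | exact: normr_entry_le_mx].
Qed.

Lemma is_norm_continuous : continuous N.
Proof.
have [b b0 hb] := is_norm_le_mx.
move=> x; apply/(@cvgrPdist_lt _ _ _ _ (nbhs_filter x)) => e e0.
have b1 : 0 < b + 1 by rewrite ltr_wpDl.
apply/nbhs_ballP; exists (e / (b + 1)); first by rewrite /= divr_gt0.
move=> y; rewrite -ball_normE /= => hxy.
apply: le_lt_trans (is_norm_distB x y) _; apply: le_lt_trans (hb _) _.
apply: le_lt_trans (_ : _ <= (b + 1) * `|x - y|) _.
  by apply: ler_wpM2r => //; rewrite lerDl.
by rewrite -ltr_pdivlMl // mulrC.
Qed.

(* [a] is the inverse of the minimum of [N] on the compact unit sphere of the
   sup norm. *)
Lemma mx_le_is_norm : exists2 a, 0 < a & forall x, `|x| <= a * N x.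
Proof.
pose S := [set x : 'rV[R]_d | `|x| = 1].
have normalize x : x != 0 -> S (`|x|^-1 *: x).
  move=> x0; rewrite /S /= normrZ normrV ?unitfE ?normr_eq0 //.
  by rewrite normr_id mulVf // normr_eq0.
have [S0|S0] := pselect (S !=set0); last first.
  exists 1 => // x; have [->|x0] := eqVneq x 0.
    by rewrite normr0 mul1r is_norm_ge0.
  by exfalso; apply: S0; exists (`|x|^-1 *: x); exact: normalize.
have cS : compact S.
  apply: bounded_closed_compact.
    by exists 1; split=> // M M1 x; rewrite /S /= => ->; exact: ltW.
  by have := @preimage_closed _ _ (Num.norm : 'rV[R]_d -> R) [set 1]
    (fun x _ => @norm_continuous _ _ x) (@closed_eq R 1).
have [c Sc hc] := EVT_min_rV S0 cS (continuous_subspaceT is_norm_continuous).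
have Nc : 0 < N c.
  rewrite lt_neqAle is_norm_ge0 andbT; apply/eqP => /esym Nc0.
  case: hN => _ [N0 _]; move: Sc; rewrite inE /S /= (N0 _ Nc0) normr0.
  by move/esym/eqP; rewrite oner_eq0.
exists (N c)^-1 => [|x]; first by rewrite invr_gt0.
have [->|x0] := eqVneq x 0; first by rewrite normr0 mulr_ge0 ?invr_ge0 ?is_norm_ge0.
have := hc _ (mem_set (normalize x x0)).
rewrite is_normZ normrV ?unitfE ?normr_eq0 // normr_id => h.
by rewrite ler_pdivlMl // -ler_pdivlMr ?normr_gt0 // mulrC.
Qed.

End is_norm_theory.

Section bounded_integrals.
Context dT (T : measurableType dT) (R : realType) (mu : {measure set T -> \bar R}).
Hypothesis mu_le1 : (mu [set: T] <= 1)%E.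

Import HBNNSimple.

(* No measurability is needed: the integral of a nonnegative function is a
   supremum over the simple functions below it. *)
Lemma ge0_integral_le_bound (f : T -> \bar R) (K : R) : 0 <= K ->
  (forall x, 0 <= f x <= K%:E)%E -> (\int[mu]_x f x <= K%:E)%E.
Proof.
move=> K0 hf; rewrite ge0_integralTE; last by move=> x; case/andP: (hf x).
apply: ge_ereal_sup => _ [h hfh <-].
have := integral_nnsfun mu measurableT h; rewrite patch_setT => <-.
apply: (@le_trans _ _ (\int[mu]_x cst K%:E x)%E).
  apply: ge0_le_integral => //.
  - by move=> x _; rewrite lee_fin.
  - by apply/measurable_realfun.measurable_EFinP.
  - by move=> x _; apply: le_trans (hfh x) _; case/andP: (hf x).
rewrite integral_cst // muleC gee_pMl ?lee_fin //.
by rewrite ge0_fin_numE ?(le_lt_trans mu_le1) ?ltry.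
Qed.

Lemma Rintegral_normr_le (g : T -> R) (K : R) : 0 <= K ->
  (forall x, `|g x| <= K) -> `|\int[mu]_x g x| <= K.
Proof.
move=> K0 hg; rewrite /Rintegral integralE.
have hp : (0 <= \int[mu]_x (EFin \o g)^\+ x <= K%:E)%E.
  rewrite integral_ge0 => [|x _]; last exact: funepos_ge0.
  apply: ge0_integral_le_bound => // x; rewrite funepos_ge0 funeposE /=.
  by rewrite ge_max !lee_fin K0 (le_trans (ler_norm _) (hg x)).
have hn : (0 <= \int[mu]_x (EFin \o g)^\- x <= K%:E)%E.
  rewrite integral_ge0 => [|x _]; last exact: funeneg_ge0.
  apply: ge0_integral_le_bound => // x; rewrite funeneg_ge0 funenegE /=.
  rewrite ge_max !lee_fin K0 andbT; move: (hg x); rewrite ler_norml => /andP[]; lra.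
move: hp hn; case: (\int[mu]_x (EFin \o g)^\+ x)%E => [a| |] /andP[];
  rewrite ?leye_eq ?lee_fin // => a0 aK.
case: (\int[mu]_x (EFin \o g)^\- x)%E => [b| |] /andP[];
  rewrite ?leye_eq ?lee_fin // => b0 bK /=.
by rewrite ler_norml; apply/andP; split; lra.
Qed.

End bounded_integrals.

Lemma kpow_normr_le (dY : measure_display) (Y : measurableType dY) (R : realType)
  (P : R.-pker Y ~> Y) (n : nat) (g : Y -> R) (K : R) :
  0 <= K -> (forall z, `|g z| <= K) -> forall y, `|kpow P n g y| <= K.
Proof.
move=> K0 hg; elim: n => [|n IH] y; first exact: hg.
by apply: Rintegral_normr_le => //; rewrite prob_kernel.
Qed.

Lemma row_kpow_mx_norm_le (dY : measure_display) (Y : measurableType dY)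
  (R : realType) (d : nat) (P : R.-pker Y ~> Y) (n : nat) (g : Y -> 'rV[R]_d)
  (K : R) (y0 : Y) : 0 <= K -> (forall y, `|g y| <= K) ->
  `|\row_i kpow P n (fun y => g y 0 i) y0| <= K.
Proof.
move=> K0 hg; apply: mx_norm_le_entries => // i; rewrite mxE.
by apply: kpow_normr_le => // y; apply: le_trans (normr_entry_le_mx _ _) (hg y).
Qed.

Section moreau_norm.
Variables (R : realType) (d : nat) (nrm ns : 'rV[R]_d -> R) (xi : R).
Hypotheses (hnrm : is_norm nrm) (hns : is_norm ns) (xi0 : 0 < xi).

Let S x := [set nrm u ^+ 2 / 2 + ns (x - u) ^+ 2 / (2 * xi) | u in [set: 'rV[R]_d]].

Let S_ge0 x y : S x y -> 0 <= y.
Proof.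
by move=> [u _ <-]; rewrite addr_ge0 // divr_ge0 ?sqr_ge0 // mulr_ge0 // ltW.
Qed.

Let S_neq0 x : S x !=set0.
Proof. by exists (nrm 0 ^+ 2 / 2 + ns (x - 0) ^+ 2 / (2 * xi)); exists 0. Qed.

Let inf_S_ge0 x : 0 <= inf (S x).
Proof. by apply: lb_le_inf => // y /S_ge0. Qed.

Let normm_sqr x : normm nrm ns xi x ^+ 2 = 2 * inf (S x).
Proof. by rewrite /normm -/(S x) sqr_sqrtr // mulr_ge0. Qed.

Lemma normm_ge0 x : 0 <= normm nrm ns xi x.
Proof. exact: sqrtr_ge0. Qed.

Lemma normm_le x : normm nrm ns xi x <= nrm x.
Proof.
rewrite -ler_sqr ?nnegrE ?normm_ge0 ?is_norm_ge0 // normm_sqr.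
have : inf (S x) <= nrm x ^+ 2 / 2.
  apply: ge_inf; first by exists 0 => y /S_ge0.
  by exists x => //; rewrite subrr is_norm0 // expr0n /= mul0r addr0.
lra.
Qed.

(* For every [u], with [nrm <= k ns],
   [nrm x ^+ 2 <= 2 nrm u ^+ 2 + 2 k ^+ 2 ns (x - u) ^+ 2], which is at most [Q]
   times the quantity minimised at [u]. *)
Lemma is_norm_le_normm : exists2 Q, 0 <= Q & forall x, nrm x <= Q * normm nrm ns xi x.
Proof.
have [b b0 hb] := is_norm_le_mx hnrm; have [a a0 ha] := mx_le_is_norm hns.
pose k := b * a; have k0 : 0 <= k by rewrite mulr_ge0 // ltW.
have hk v : nrm v <= k * ns v.
  by apply: le_trans (hb v) _; rewrite -mulrA ler_wpM2l.
pose Q := 4 + 4 * k ^+ 2 * xi.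
have kxi0 : 0 <= k ^+ 2 * xi by rewrite mulr_ge0 ?sqr_ge0 // ltW.
have Q4 : 4 <= Q by rewrite /Q -mulrA lerDl mulr_ge0.
exists Q => [|x]; first lra.
have hinf : nrm x ^+ 2 / Q <= inf (S x).
  apply: lb_le_inf => // _ [u _ <-].
  set p := nrm u; set q := ns (x - u).
  have p0 : 0 <= p := is_norm_ge0 hnrm u.
  have q0 : 0 <= q := is_norm_ge0 hns (x - u).
  have hx : nrm x <= p + k * q.
    rewrite -{1}(subrK u x) addrC; apply: le_trans (is_normD hnrm _ _) _.
    by rewrite lerD2l hk.
  have n2 : nrm x ^+ 2 <= 2 * p ^+ 2 + 2 * k ^+ 2 * q ^+ 2.
    have : nrm x ^+ 2 <= (p + k * q) ^+ 2.
      rewrite ler_sqr ?nnegrE ?(is_norm_ge0 hnrm) //.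
      by rewrite (addr_ge0 p0 (mulr_ge0 k0 q0)).
    have : 0 <= (p - k * q) ^+ 2 by exact: sqr_ge0.
    rewrite !expr2; nra.
  rewrite ler_pdivrMr; last lra.
  have -> : (p ^+ 2 / 2 + q ^+ 2 / (2 * xi)) * Q = 2 * p ^+ 2 + 2 * k ^+ 2 * q ^+ 2
      + 2 * p ^+ 2 * (k ^+ 2 * xi) + 4 * (q ^+ 2 / (2 * xi)).
    by rewrite /Q; field; rewrite gt_eqF.
  have : 0 <= p ^+ 2 * (k ^+ 2 * xi) by rewrite mulr_ge0 ?sqr_ge0.
  have : 0 <= q ^+ 2 / (2 * xi) by rewrite divr_ge0 ?sqr_ge0 // mulr_ge0 // ltW.
  lra.
rewrite -ler_sqr ?nnegrE ?is_norm_ge0 ?mulr_ge0 ?normm_ge0 //; last lra.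
rewrite exprMn normm_sqr; move: hinf; rewrite ler_pdivrMr; last lra.
have := inf_S_ge0 x; nra.
Qed.

End moreau_norm.

Section sa_increment_bound.
Variables (R : realType) (d : nat) (Y : Type) (H : 'rV[R]_d -> Y -> 'rV[R]_d).
Variables (nrm ns : 'rV[R]_d -> R) (xi Lh B : R) (wstar : 'rV[R]_d).
Hypotheses (hnrm : is_norm nrm) (hns : is_norm ns) (xi0 : 0 < xi).
Hypothesis H_lipschitz : forall w w' y, nrm (H w y - H w' y) <= Lh * nrm (w - w').
Hypothesis H0_bounded : forall y, nrm (H 0 y) <= B.

Lemma is_norm_increment_le w y : nrm (H w y - w) <= (`|Lh| + 1) * nrm w + `|B|.
Proof.
have HD := is_normD hnrm (H w y - H 0 y) (H 0 y); rewrite subrK in HD.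
have HL := H_lipschitz w 0 y; rewrite subr0 in HL.
have HB := H0_bounded y.
have HwB := is_normB hnrm (H w y) w.
have HLh : Lh * nrm w <= `|Lh| * nrm w by rewrite ler_wpM2r ?is_norm_ge0 ?ler_norm.
have := ler_norm B; rewrite mulrDl mul1r.
lra.
Qed.

Lemma increment_mx_norm_le : exists2 c, 0 <= c &
  forall w y, `|H w y - w| <= c * (normm nrm ns xi (w - wstar) + 1).
Proof.
have [a a0 ha] := mx_le_is_norm hnrm.
have [Q Q0 hQ] := is_norm_le_normm hnrm hns xi0.
set L := `|Lh| + 1; set W := nrm wstar.
have L0 : 0 <= L by rewrite addr_ge0.
have W0 : 0 <= W := is_norm_ge0 hnrm wstar.
exists (a * (L * (Q + W) + `|B|)) => [|w y].
  by rewrite mulr_ge0 ?addr_ge0 ?mulr_ge0 ?addr_ge0 // ltW.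
apply: le_trans (ha _) _; rewrite -mulrA ler_wpM2l ?(ltW a0) //.
set nm := normm nrm ns xi (w - wstar); have nm0 : 0 <= nm := normm_ge0 _ _ _ _.
have hw : nrm w <= Q * nm + W.
  rewrite -{1}(subrK wstar w); apply: le_trans (is_normD hnrm _ _) _.
  by rewrite lerD2r hQ.
apply: le_trans (is_norm_increment_le w y) _.
apply: le_trans (lerD (ler_wpM2l L0 hw) (lexx `|B|)) _.
rewrite -subr_ge0 (_ : _ - _ = L * Q + L * W * nm + `|B| * nm); last by ring.
by rewrite !addr_ge0 ?mulr_ge0.
Qed.

End sa_increment_bound.

Section learning_rates.
Variable R : realType.

(* From [1 - 1/6 <= expR (-1/6)]: [expR 1 <= (6/5)^6 < 3]. *)
Lemma expR1_le3 : expR (1 : R) <= 3.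
Proof.
have y56 : 5 / 6 <= expR (- (1 / 6) : R) by have := expR_ge1Dx (- (1 / 6) : R); lra.
have y6 : (5 / 6) ^+ 6 <= expR (- (1 / 6) : R) ^+ 6 by rewrite lerXn2r ?nnegrE.
rewrite -expRM_natr (_ : _ * 6%:R = -1) in y6; last lra.
rewrite -[1]opprK expRN invf_ple ?posrE ?expR_gt0 //.
by apply: le_trans y6; rewrite !exprS expr0; lra.
Qed.

Lemma ln_ge1 (x : R) : 3 <= x -> 1 <= ln x.
Proof.
move=> x3; rewrite -[1](expRK (1 : R)) ler_ln ?posrE ?expR_gt0 //; last lra.
exact: le_trans expR1_le3 x3.
Qed.

Lemma ln_powR_ge1 (x nu : R) : 3 <= x -> 0 <= nu -> 1 <= ln x `^ nu.
Proof.
move=> x3 nu0; rewrite -[leLHS](powRr0 (ln x)).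
by apply: ler_powR; [exact: ln_ge1 |].
Qed.

Lemma ler_pdiv2l (C a b : R) : 0 < C -> 0 < b -> b <= a -> C / a <= C / b.
Proof.
by move=> C0 b0 ba; rewrite ler_pM2l // lef_pV2 ?posrE // (lt_le_trans b0).
Qed.

Lemma shift3_ge3 (t : nat) : 3 <= (t%:R + 3 : R). Proof. by rewrite lerDr. Qed.

Lemma shift3_gt0 (t : nat) : 0 < (t%:R + 3 : R).
Proof. by apply: lt_le_trans (shift3_ge3 t); lra. Qed.

Lemma ler_shift3 (m t : nat) : (m <= t)%N -> (m%:R + 3 : R) <= t%:R + 3.
Proof. by move=> mt; rewrite lerD2r ler_nat. Qed.

Lemma shift3_le_mul_ln (t : nat) : (t%:R + 3 : R) <= (t%:R + 3) * ln (t%:R + 3).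
Proof.
by rewrite ler_peMr ?ln_ge1 ?shift3_ge3 // ltW // shift3_gt0.
Qed.

Definition lr_admissible (Calpha : R) (alpha T : nat -> R) : Prop :=
  [/\ forall t, 0 < alpha t, forall m, 0 < T m,
      forall m t, (m <= t)%N -> alpha t <= T m &
      forall t, Calpha / ((t%:R + 3) * ln (t%:R + 3)) <= alpha t].

Lemma harmonic_lr_admissible (Calpha nu1 : R) (alpha T : nat -> R) :
  0 < Calpha -> 0 <= nu1 ->
  (forall t, alpha t = Calpha / (t%:R + 3)) ->
  (forall m, T m = Calpha * (ln (m%:R + 3 : R)) `^ nu1 / (m%:R + 3)) ->
  lr_admissible Calpha alpha T.
Proof.
move=> C0 nu0 ha hT; have L1 m := ln_powR_ge1 (shift3_ge3 m) nu0.
split=> [t|m|m t mt|t]; rewrite ?ha ?hT.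
- by rewrite divr_gt0 // shift3_gt0.
- by rewrite divr_gt0 ?mulr_gt0 ?shift3_gt0 // (lt_le_trans ltr01).
- rewrite mulrAC; apply: le_trans (ler_pdiv2l C0 (shift3_gt0 m) (ler_shift3 mt)) _.
  by rewrite ler_peMr // ltW // divr_gt0 // shift3_gt0.
- exact: ler_pdiv2l C0 (shift3_gt0 t) (shift3_le_mul_ln t).
Qed.

Lemma poly_lr_admissible (Calpha nu nu2 : R) (alpha T : nat -> R) :
  0 < Calpha -> 0 <= nu2 -> nu2 <= nu -> nu <= 1 ->
  (forall t, alpha t = Calpha / (t%:R + 3) `^ nu) ->
  (forall m, T m = Calpha / (m%:R + 3) `^ nu2) ->
  lr_admissible Calpha alpha T.
Proof.
move=> C0 nu20 nu21 nu1 ha hT.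
have ge1 t : 1 <= (t%:R + 3 : R) by apply: le_trans (shift3_ge3 t); lra.
split=> [t|m|m t mt|t]; rewrite ?ha ?hT.
- by rewrite divr_gt0.
- by rewrite divr_gt0.
- apply: ler_pdiv2l => //; apply: le_trans (ler_powR (ge1 m) nu21) _.
  apply: ge0_ler_powR; rewrite ?nnegrE ?ler_shift3 ?(ltW (shift3_gt0 _)) //.
  exact: le_trans nu21.
- apply: ler_pdiv2l => //; apply: le_trans (shift3_le_mul_ln t).
  by apply: le_trans (ler_powR (ge1 t) nu1) _; rewrite powRr1 // ltW // shift3_gt0.
Qed.

Lemma harmonic_log_lr_admissible (Calpha nu : R) (alpha T : nat -> R) :
  0 < Calpha -> 0 <= nu -> nu <= 1 ->
  (forall t, alpha t = Calpha / ((t%:R + 3) * (ln (t%:R + 3 : R)) `^ nu)) ->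
  (forall m, T m = Calpha / (m%:R + 3)) ->
  lr_admissible Calpha alpha T.
Proof.
move=> C0 nu0 nu1 ha hT; have L1 t := ln_powR_ge1 (shift3_ge3 t) nu0.
split=> [t|m|m t mt|t]; rewrite ?ha ?hT.
- by rewrite divr_gt0 ?mulr_gt0 ?shift3_gt0 // (lt_le_trans ltr01).
- by rewrite divr_gt0 // shift3_gt0.
- apply: ler_pdiv2l (shift3_gt0 m) _ => //.
  by apply: le_trans (ler_shift3 mt) _; rewrite ler_peMr.
- apply: ler_pdiv2l => //; first by rewrite mulr_gt0 ?shift3_gt0 ?(lt_le_trans ltr01).
  have ln1 := ln_ge1 (shift3_ge3 t).
  apply: ler_wpM2l => //; apply: le_trans (ler_powR ln1 nu1) _.
  by rewrite powRr1 // (le_trans ler01).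
Qed.

Lemma lr_setup_admissible (Calpha : R) (alpha T : nat -> R) :
  0 < Calpha -> lr_setup Calpha alpha T -> lr_admissible Calpha alpha T.
Proof.
move=> C0 [[nu1 [/andP[nu10 _] [ha hT]]]|[[nu [nu2 [/andP[nu0 nu1]
  [/andP[nu20 nu2nu] [ha hT]]]]]|[nu [/andP[nu0 nu1] [ha hT]]]]].
- exact: harmonic_lr_admissible C0 (ltW nu10) ha hT.
- apply: poly_lr_admissible C0 _ _ (ltW nu1) ha hT; first lra.
  by apply: le_trans (ltW nu2nu) _; rewrite ler_pdivrMr; nra.
- exact: harmonic_log_lr_admissible C0 (ltW nu0) (ltW nu1) ha hT.
Qed.

Lemma lnln_increment_le (x : R) :
  3 <= x -> ln (ln (x + 1)) - ln (ln x) <= 1 / (x * ln x).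
Proof.
move=> x3; have x0 : 0 < x by lra.
have lnx1 := ln_ge1 x3; have lnx11 : 1 <= ln (x + 1) by apply: ln_ge1; lra.
have ln1D (u : R) : 0 <= u -> ln (1 + u) <= u.
  by move=> u0; apply: le_ln1Dx; apply: lt_le_trans u0; rewrite ltrN10.
have -> : ln (ln (x + 1)) - ln (ln x) = ln (1 + (ln (x + 1) - ln x) / ln x).
  by rewrite -ln_div ?posrE; try lra; congr ln; field; lra.
have -> : ln (x + 1) - ln x = ln (1 + 1 / x).
  by rewrite -ln_div ?posrE; try lra; congr ln; field; lra.
have lnx_le : ln (1 + 1 / x) <= 1 / x by apply: ln1D; rewrite divr_ge0 //; lra.
have lnx_ge0 : 0 <= ln (1 + 1 / x) by rewrite ln_ge0 // lerDl divr_ge0 //; lra.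
apply: le_trans (ln1D _ (divr_ge0 lnx_ge0 _)) _; first lra.
rewrite (_ : 1 / (x * ln x) = (1 / x) / ln x); last by field; lra.
by rewrite ler_pM2r // invr_gt0; lra.
Qed.

Lemma next_anchor_spec (alpha : nat -> R) (Tm : R) (s : nat) :
  0 < Tm -> (exists k, Tm <= \sum_(s <= t < k) alpha t) ->
  (forall t, (s <= t)%N -> alpha t <= Tm) ->
  (s < next_anchor alpha Tm s)%N /\
  \sum_(s <= t < next_anchor alpha Tm s) alpha t <= Tm + Tm.
Proof.
move=> T0 [k0 hk0] hal; rewrite /next_anchor.
case: pselect => [ex|]; last by case; exists k0; apply/asboolP.
case: ex_minnP => -[|k] /asboolP hk hmin; first by move: hk; rewrite big_geq //; lra.
have sk : (s <= k)%N.
  by rewrite leqNgt; apply/negP => ks; move: hk; rewrite big_geq //; lra.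
split => //; rewrite big_nat_recr //=.
have : \sum_(s <= t < k) alpha t < Tm.
  by rewrite ltNge; apply/negP => hle; have := hmin k (asboolT hle); rewrite ltnn.
by have := hal k sk; lra.
Qed.

Section anchors.
Variables (Calpha : R) (alpha T : nat -> R).
Hypotheses (C0 : 0 < Calpha) (hadm : lr_admissible Calpha alpha T).

(* Telescoping [t |-> ln (ln (t + 3))] against the lower bound on [alpha t]. *)
Lemma lnln_le_sum (s k : nat) : (s <= k)%N ->
  Calpha * (ln (ln (k%:R + 3)) - ln (ln (s%:R + 3))) <= \sum_(s <= t < k) alpha t.
Proof.
case: hadm => _ _ _ alpha_ge; elim: k => [|k IH].
  by rewrite leqn0 => /eqP ->; rewrite big_geq // subrr mulr0.
rewrite leq_eqVlt => /orP[/eqP ->|sk]; first by rewrite big_geq // subrr mulr0.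
rewrite big_nat_recr //= -natr1 -addrA (addrC 1) addrA.
have := ler_wpM2l (ltW C0) (lnln_increment_le (shift3_ge3 k)).
have := alpha_ge k; have := IH sk.
rewrite -[Calpha / _]mulr1 -mulrA mul1r !mulrBr; lra.
Qed.

Lemma lr_sum_unbounded s (B : R) : exists k, B <= \sum_(s <= t < k) alpha t.
Proof.
pose M := B / Calpha + ln (ln (s%:R + 3)).
pose k := maxn s (Num.truncn (expR (expR M))).+1.
exists k; apply: (le_trans _ (lnln_le_sum (leq_maxl _ _))).
have hk : expR (expR M) <= k%:R + 3.
  apply: le_trans (ltW (truncnS_gt _)) _.
  by apply: (@le_trans _ _ k%:R); rewrite ?ler_nat ?leq_maxr ?lerDl.
have h1 : expR M <= ln (k%:R + 3).
  by rewrite -ler_expR lnK // posrE (lt_le_trans _ hk) // expR_gt0.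
have h2 : M <= ln (ln (k%:R + 3)).
  by rewrite -ler_expR lnK // posrE (lt_le_trans _ h1) // expR_gt0.
by rewrite -ler_pdivrMl // mulrC; rewrite /M in h2; lra.
Qed.

Lemma anchor_block_spec m : (m <= anchor alpha T m)%N ->
  (anchor alpha T m < anchor alpha T m.+1)%N /\
  \sum_(anchor alpha T m <= t < anchor alpha T m.+1) alpha t <= T m + T m.
Proof.
case: hadm => _ T_gt0 alpha_le _ hm; apply: next_anchor_spec => //.
  exact: lr_sum_unbounded.
by move=> t ht; apply: alpha_le; exact: leq_trans hm ht.
Qed.

Lemma anchor_ge m : (m <= anchor alpha T m)%N.
Proof.
elim: m => [//|m IH]; have [lt_next _] := anchor_block_spec IH.
exact: leq_ltn_trans IH lt_next.
Qed.

Lemma anchor_block_sum_le m :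
  \sum_(anchor alpha T m <= t < anchor alpha T m.+1) alpha t <= T m + T m.
Proof. by have [] := anchor_block_spec (anchor_ge m). Qed.

End anchors.

End learning_rates.

Theorem lemma6 (R : realType) (d : nat) (dY : measure_display) (Y : measurableType dY)
  (P : R.-pker Y ~> Y) (piY : probability Y R) (CA rho : R)
  (H : 'rV[R]_d -> Y -> 'rV[R]_d) (nrm ns : 'rV[R]_d -> R) (kappa Lh xi : R)
  (wstar : 'rV[R]_d) (Calpha : R) (alpha T : nat -> R) :
  (* stationarity and uniqueness of the stationary distribution *)
  (forall A, measurable A -> (\int[piY]_y P y A = piY A)%E) ->
  (forall mu : probability Y R,
      (forall A, measurable A -> (\int[mu]_y P y A = mu A)%E) ->
      forall A, measurable A -> mu A = piY A) ->
  (* geometric mixing in total variation (L1 distance) *)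
  0 <= rho < 1 ->
  (forall (y : Y) (n : nat) (f : Y -> R), measurable_fun [set: Y] f ->
      (forall z, `|f z| <= 1) ->
      `|kpow P n f y - \int[piY]_(z in [set: Y]) f z| <= CA * rho ^+ n) ->
  (* H, h, norms *)
  (forall w (i : 'I_d), measurable_fun [set: Y] (fun y => H w y 0 i)) ->
  is_norm nrm ->
  0 <= kappa < 1 ->
  (forall w w', nrm (vint piY (H w) - vint piY (H w')) <= kappa * nrm (w - w')) ->
  vint piY (H wstar) = wstar ->
  (forall w w' y, nrm (H w y - H w' y) <= Lh * nrm (w - w')) ->
  (exists B, forall y, nrm (H 0 y) <= B) ->
  is_norm ns -> half_sq_smooth ns -> 0 < xi ->
  (* learning rates *)
  0 < Calpha -> lr_setup Calpha alpha T ->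
  exists (C : R) (m0 : nat), forall (w0 : 'rV[R]_d) (Ys : nat -> Y) (m : nat),
    (m0 <= m)%N ->
    let tm := anchor alpha T m in
    let wtm := witer H alpha w0 Ys tm in
    let G := fun (w : 'rV[R]_d) (y : Y) => H w y - w in
    let z2 := \sum_(tm <= t < anchor alpha T m.+1)
                alpha t *: (G wtm (Ys t.+1)
                  - \row_i kpow P (t.+1 - tm) (fun y => G wtm y 0 i) (Ys tm)) in
    normm nrm ns xi z2 <= T m * C * (normm nrm ns xi (wtm - wstar) + 1).
Proof.
move=> _ _ _ _ _ hnrm _ _ _ hLip [B hB] hns _ xi0 C0 /(lr_setup_admissible C0) hadm.
have [c c0 hG] := increment_mx_norm_le wstar hnrm hns xi0 hLip hB.
have [b b0 hb] := is_norm_le_mx hnrm.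
exists (4 * b * c), 0%N => w0 Ys m _ /=.
set s := anchor alpha T m; set w := witer H alpha w0 Ys s.
set nm := normm nrm ns xi (w - wstar).
have K0 : 0 <= c * (nm + 1) by rewrite mulr_ge0 ?addr_ge0 ?normm_ge0.
have hterm t : nrm (H w (Ys t.+1) - w
    - \row_i kpow P (t.+1 - s) (fun y => (H w y - w) 0 i) (Ys s))
    <= b * (c * (nm + 1) + c * (nm + 1)).
  apply: le_trans (hb _) (ler_wpM2l b0 _).
  apply: le_trans (ler_normB _ _) (lerD (hG _ _) _).
  by apply: row_kpow_mx_norm_le => // y; exact: hG.
have [alpha_gt0 _ _ _] := hadm.
apply: le_trans (normm_le hnrm hns xi0 _) _.
apply: le_trans (is_norm_sum_scale_le hnrm _ (fun t => ltW (alpha_gt0 t)) hterm) _.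
apply: le_trans (ler_wpM2r _ (anchor_block_sum_le C0 hadm m)) _.
  by rewrite mulr_ge0 ?addr_ge0.
have -> : (T m + T m) * (b * (c * (nm + 1) + c * (nm + 1)))
  = T m * (4 * b * c) * (nm + 1) by ring.
exact: lexx.
Qed.
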